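(* Let $H$ be a real Hilbert space, $A:H\to H$ bounded linear, $f\in H$ such that $Au=f$ is solvable, and $y$ the minimal-norm solution ($Ay=f$, $y\perp\mathcal N(A)$). Let $P:H\to H$ be bounded linear with $T:=PA$ selfadjoint, $T\ge0$, and $\mathcal N(T)=\mathcal N(A)$. Let $h>0$ be a constant with $h\|T\|<2$, and $u_0\in H$ with $u_0-y\perp\mathcal N(A)$. For $\delta>0$ let $f_\delta\in H$ with $\|f_\delta-f\|\le\delta$, and define $$u_{n+1}=u_n-hP(Au_n-f_\delta),\quad n\ge0,$$ starting from $u_0$ (the iterates depend on $\delta$). If positive integers $n_\delta$ satisfy $\lim_{\delta\to0}n_\delta h=\infty$ and $\lim_{\delta\to0}n_\delta h\delta=0$, then $\lim_{\delta\to0}\|u_{n_\delta}-y\|=0$. In particular this holds for $n_\delta=C/(h\delta^{\gamma})$ (rounded to an integer) with constants $C>0$, $\gamma\in(0,1)$.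
   Context: $\mathcal N(A)=\{u\in H:Au=0\}$. *)

From Stdlib Require Import Reals Lra.
Open Scope R_scope.

Record HilbertSpace := {
  hcar :> Type;
  hzero : hcar;
  hadd : hcar -> hcar -> hcar;
  hopp : hcar -> hcar;
  hscal : R -> hcar -> hcar;
  hinner : hcar -> hcar -> R;
  hadd_assoc : forall x y z, hadd x (hadd y z) = hadd (hadd x y) z;
  hadd_comm : forall x y, hadd x y = hadd y x;
  hadd_0 : forall x, hadd hzero x = x;
  hadd_opp : forall x, hadd x (hopp x) = hzero;
  hscal_assoc : forall a b x, hscal a (hscal b x) = hscal (a * b) x;
  hscal_1 : forall x, hscal 1 x = x;
  hscal_distr_l : forall a x y, hscal a (hadd x y) = hadd (hscal a x) (hscal a y);
  hscal_distr_r : forall a b x, hscal (a + b) x = hadd (hscal a x) (hscal b x);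
  hinner_sym : forall x y, hinner x y = hinner y x;
  hinner_add_l : forall x y z, hinner (hadd x y) z = hinner x z + hinner y z;
  hinner_scal_l : forall a x y, hinner (hscal a x) y = a * hinner x y;
  hinner_nonneg : forall x, 0 <= hinner x x;
  hinner_def : forall x, hinner x x = 0 -> x = hzero;
  hcomplete : forall s : nat -> hcar,
    (forall eps, 0 < eps -> exists N, forall m n, (N <= m)%nat -> (N <= n)%nat ->
        sqrt (hinner (hadd (s m) (hopp (s n))) (hadd (s m) (hopp (s n)))) < eps) ->
    exists l, forall eps, 0 < eps -> exists N, forall n, (N <= n)%nat ->
        sqrt (hinner (hadd (s n) (hopp l)) (hadd (s n) (hopp l))) < eps
}.

Arguments hzero {_}.
Arguments hadd {_}.
Arguments hopp {_}.
Arguments hscal {_}.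
Arguments hinner {_}.

Definition hsub {H : HilbertSpace} (x y : H) : H := hadd x (hopp y).
Definition hnorm {H : HilbertSpace} (x : H) : R := sqrt (hinner x x).

Definition bounded_linear {H : HilbertSpace} (A : H -> H) : Prop :=
  (forall x y, A (hadd x y) = hadd (A x) (A y)) /\
  (forall a x, A (hscal a x) = hscal a (A x)) /\
  (exists C, forall x, hnorm (A x) <= C * hnorm x).

Definition is_opnorm {H : HilbertSpace} (T : H -> H) (M : R) : Prop :=
  is_lub (fun r => exists x : H, hnorm x <= 1 /\ r = hnorm (T x)) M.

Definition in_kernel {H : HilbertSpace} (A : H -> H) (u : H) : Prop := A u = hzero.

Definition orth_kernel {H : HilbertSpace} (A : H -> H) (v : H) : Prop :=
  forall z, in_kernel A z -> hinner v z = 0.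

Definition selfadjoint {H : HilbertSpace} (T : H -> H) : Prop :=
  forall x y, hinner (T x) y = hinner x (T y).

Definition nonneg_op {H : HilbertSpace} (T : H -> H) : Prop :=
  forall x, 0 <= hinner (T x) x.

Fixpoint iterate {H : HilbertSpace} (P A : H -> H) (h : R) (fd u0 : H) (n : nat) : H :=
  match n with
  | O => u0
  | S k => let u := iterate P A h fd u0 k in hsub u (hscal h (P (hsub (A u) fd)))
  end.

(* Put T := PA and S := I - hT.  As T is selfadjoint, nonnegative and
   h‖T‖ < 2, S is a selfadjoint operator satisfying the energy inequality
       h (2 - h‖T‖) <Tx,x>  <=  ‖x‖² - ‖Sx‖²,
   so S is a contraction and ‖S^n x‖² decreases to a limit.  The distances
   between the even iterates S^{2k}x are differences of the numbers ‖S^n x‖²,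
   so these iterates form a Cauchy sequence; its limit z lies in N(T)
   because ‖T S^n x‖² is bounded by the energy drop, and z ⊥ N(T) whenever
   x ⊥ N(T), hence z = 0 and S^n x -> 0 ("noise-free convergence").
   With exact data u_n - y = S^n (u_0 - y); with noisy data the iterates
   differ from these by at most n h ‖P‖ δ.  The condition n_δ h -> ∞ kills
   the first term and n_δ h δ -> 0 the second; finally n_δ ≈ C/(h δ^γ)
   satisfies both conditions. *)

From Stdlib Require Import Reals Lra Psatz.
Open Scope R_scope.

Lemma Rabs_le_bounds x a : Rabs x <= a -> - a <= x <= a.
Proof.
  intro Hx. pose proof (Rle_abs x). pose proof (Rle_abs (- x)).
  rewrite Rabs_Ropp in *. lra.
Qed.

Lemma sqrt_lt_square a e : 0 <= a -> 0 < e -> a < e * e -> sqrt a < e.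
Proof. intros. rewrite <- (sqrt_square e) by lra. apply sqrt_lt_1_alt. lra. Qed.

Lemma quadratic_discriminant a b c :
  0 <= c -> (forall t, 0 <= a + 2 * b * t + c * t * t) -> b * b <= a * c.
Proof.
  intros Hc Ht. assert (Ha : 0 <= a) by (specialize (Ht 0); lra).
  destruct (Req_dec c 0) as [Hc0 | Hc0].
  - subst c. destruct (Req_dec b 0) as [Hb | Hb]; [subst; nra |].
    exfalso. specialize (Ht (- (a + 1) / (2 * b))).
    replace (a + 2 * b * (- (a + 1) / (2 * b)) + 0 * (- (a + 1) / (2 * b)) * (- (a + 1) / (2 * b)))
      with (-1) in Ht by (field; auto).
    lra.
  - specialize (Ht (- b / c)).
    replace (a + 2 * b * (- b / c) + c * (- b / c) * (- b / c)) with (a - b * b / c) in Ht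
      by (field; lra).
    apply Rmult_le_reg_r with (/ c); [apply Rinv_0_lt_compat; lra |].
    replace (a * c * / c) with a by (field; lra). unfold Rdiv in Ht. lra.
Qed.

Section VectorAlgebra.
Context {H : HilbertSpace}.
Implicit Types x y z : H.

Lemma hadd_cancel x y z : hadd x y = hadd x z -> y = z.
Proof.
  intro E.
  assert (E' : hadd (hopp x) (hadd x y) = hadd (hopp x) (hadd x z)) by now rewrite E.
  rewrite !hadd_assoc, (hadd_comm _ (hopp x)), hadd_opp, !hadd_0 in E'. exact E'.
Qed.

Lemma hadd_0r x : hadd x hzero = x.
Proof. rewrite hadd_comm; apply hadd_0. Qed.

Lemma hscal_0 x : hscal 0 x = hzero.
Proof.
  apply (hadd_cancel (hscal 0 x)). rewrite <- hscal_distr_r, hadd_0r. f_equal; ring.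
Qed.

Lemma hopp_scal x : hopp x = hscal (-1) x.
Proof.
  apply (hadd_cancel x). rewrite hadd_opp, <- (hscal_1 _ x) at 1.
  rewrite <- hscal_distr_r. replace (1 + -1) with 0 by ring. now rewrite hscal_0.
Qed.

Lemma hscal_zero a : hscal a (@hzero H) = hzero.
Proof. rewrite <- (hscal_0 hzero), hscal_assoc. f_equal; ring. Qed.

Lemma hinner_add_r x y z : hinner x (hadd y z) = hinner x y + hinner x z.
Proof. rewrite hinner_sym, hinner_add_l, (hinner_sym _ y), (hinner_sym _ z). ring. Qed.

Lemma hinner_scal_r a x y : hinner x (hscal a y) = a * hinner x y.
Proof. rewrite hinner_sym, hinner_scal_l, hinner_sym. ring. Qed.

Lemma hinner_0l y : hinner hzero y = 0.
Proof. rewrite <- (hscal_0 hzero), hinner_scal_l. ring. Qed.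

Lemma hinner_0r y : hinner y hzero = 0.
Proof. rewrite hinner_sym; apply hinner_0l. Qed.

Lemma hinner_opp_l x z : hinner (hopp x) z = - hinner x z.
Proof. rewrite hopp_scal, hinner_scal_l. ring. Qed.

Lemma hinner_sub_l x y z : hinner (hsub x y) z = hinner x z - hinner y z.
Proof. unfold hsub. rewrite hinner_add_l, hinner_opp_l. ring. Qed.

Lemma hinner_sub_r x y z : hinner z (hsub x y) = hinner z x - hinner z y.
Proof. rewrite hinner_sym, hinner_sub_l, !(hinner_sym _ z). ring. Qed.

Lemma hinner_sub_sub x y : hinner (hsub x y) (hsub x y) = hinner x x - 2 * hinner x y + hinner y y.
Proof. rewrite !hinner_sub_l, !hinner_sub_r, (hinner_sym _ y x). ring. Qed.

Lemma ext_inner x y : (forall z, hinner x z = hinner y z) -> x = y.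
Proof.
  intro E. assert (Hd : hsub x y = hzero) by (apply hinner_def; rewrite hinner_sub_l, !E; ring).
  unfold hsub in Hd. apply (hadd_cancel (hopp y)).
  rewrite (hadd_comm _ (hopp y) y), hadd_opp, <- Hd, hadd_comm. reflexivity.
Qed.

End VectorAlgebra.

Create HintDb hinner_expand.
Hint Rewrite @hinner_add_l @hinner_sub_l @hinner_scal_l @hinner_opp_l @hinner_0l : hinner_expand.
Ltac vector_eq := apply ext_inner; intro; autorewrite with hinner_expand; ring.

Definition linear_op {H : HilbertSpace} (L : H -> H) : Prop :=
  (forall x y, L (hadd x y) = hadd (L x) (L y)) /\ (forall a x, L (hscal a x) = hscal a (L x)).

Section Norms.
Context {H : HilbertSpace}.
Implicit Types x y z : H.

Lemma linear_zero (L : H -> H) : linear_op L -> L hzero = hzero.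
Proof. intros [_ Hs]. rewrite <- (hscal_0 hzero), Hs. now rewrite !hscal_0. Qed.

Lemma linear_sub (L : H -> H) x y : linear_op L -> L (hsub x y) = hsub (L x) (L y).
Proof. intros [Ha Hs]. unfold hsub. rewrite Ha, !hopp_scal, Hs. reflexivity. Qed.

Lemma cauchy_schwarz_op (L : H -> H) : linear_op L -> selfadjoint L -> nonneg_op L ->
  forall x y, hinner (L x) y * hinner (L x) y <= hinner (L x) x * hinner (L y) y.
Proof.
  intros [Ha Hs] Hsa Hp x y. apply quadratic_discriminant; [apply Hp |].
  intro t. pose proof (Hp (hadd x (hscal t y))) as Q. rewrite Ha, Hs in Q.
  rewrite !hinner_add_l, !hinner_add_r, !hinner_scal_l, !hinner_scal_r in Q.
  rewrite (Hsa y x), (hinner_sym _ y (L x)) in Q. nra.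
Qed.

Lemma hnorm_nonneg x : 0 <= hnorm x.
Proof. apply sqrt_pos. Qed.

Lemma hnorm_sq x : hnorm x * hnorm x = hinner x x.
Proof. apply sqrt_sqrt, hinner_nonneg. Qed.

Lemma cauchy_schwarz x y : Rabs (hinner x y) <= hnorm x * hnorm y.
Proof.
  assert (Hid : linear_op (fun v : H => v)) by (split; auto).
  pose proof (cauchy_schwarz_op _ Hid (fun _ _ => eq_refl) (hinner_nonneg H) x y) as C.
  rewrite <- !hnorm_sq in C.
  pose proof (hnorm_nonneg x); pose proof (hnorm_nonneg y).
  rewrite <- (Rabs_right (hnorm x * hnorm y)) by nra.
  apply Rsqr_le_abs_0. unfold Rsqr. nra.
Qed.

Lemma hnorm_tri x y : hnorm (hadd x y) <= hnorm x + hnorm y.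
Proof.
  pose proof (hnorm_nonneg x); pose proof (hnorm_nonneg y); pose proof (hnorm_nonneg (hadd x y)).
  assert (Hsq : hnorm (hadd x y) * hnorm (hadd x y) <= (hnorm x + hnorm y) * (hnorm x + hnorm y)).
  { rewrite hnorm_sq, !hinner_add_l, !hinner_add_r, (hinner_sym _ y x).
    pose proof (cauchy_schwarz x y); pose proof (Rle_abs (hinner x y)).
    rewrite <- !hnorm_sq. nra. }
  nra.
Qed.

Lemma hnorm_zero : hnorm (@hzero H) = 0.
Proof. unfold hnorm. rewrite hinner_0l. apply sqrt_0. Qed.

Lemma hnorm_scal a x : hnorm (hscal a x) = Rabs a * hnorm x.
Proof.
  unfold hnorm. rewrite hinner_scal_l, hinner_scal_r, <- Rmult_assoc.
  rewrite sqrt_mult_alt by nra. f_equal. rewrite <- sqrt_Rsqr_abs. reflexivity.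
Qed.

Lemma hnorm_eq0 x : hnorm x = 0 -> x = hzero.
Proof. intro E. apply hinner_def. rewrite <- hnorm_sq, E. ring. Qed.

Lemma hnorm_sub_sym x y : hnorm (hsub x y) = hnorm (hsub y x).
Proof.
  replace (hsub x y) with (hscal (-1) (hsub y x)) by vector_eq.
  rewrite hnorm_scal, Rabs_left by lra. ring.
Qed.

Lemma hnorm_small_eq0 x : (forall e, 0 < e -> hnorm x < e) -> x = hzero.
Proof.
  intro Hs. apply hnorm_eq0. pose proof (hnorm_nonneg x).
  destruct (Req_dec (hnorm x) 0) as [E | E]; [exact E |].
  specialize (Hs (hnorm x)). lra.
Qed.

Lemma bounded_linear_bound (L : H -> H) : bounded_linear L ->
  exists C, 0 <= C /\ forall x, hnorm (L x) <= C * hnorm x.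
Proof.
  intros [_ [_ [C HC]]]. exists (Rabs C). split; [apply Rabs_pos |].
  intro x. eapply Rle_trans; [apply HC |].
  apply Rmult_le_compat_r; [apply hnorm_nonneg | apply Rle_abs].
Qed.

Lemma opnorm_bound (T : H -> H) M : linear_op T -> is_opnorm T M ->
  0 <= M /\ forall x, hnorm (T x) <= M * hnorm x.
Proof.
  intros Hl [Hub _].
  assert (HM : 0 <= M) by (apply Hub; exists hzero; rewrite (linear_zero T Hl), hnorm_zero; lra).
  split; [exact HM |]. intro x.
  destruct (Req_dec (hnorm x) 0) as [E | E].
  - rewrite (hnorm_eq0 x E), (linear_zero T Hl), hnorm_zero. lra.
  - pose proof (hnorm_nonneg x). set (r := hnorm x) in *.
    assert (Hr : 0 < / r) by (apply Rinv_0_lt_compat; lra).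
    assert (Hx : hnorm (T (hscal (/ r) x)) <= M).
    { apply Hub. exists (hscal (/ r) x). rewrite hnorm_scal, Rabs_right by lra.
      fold r. split; [right; field |]; auto. }
    destruct Hl as [_ Hs]. rewrite Hs, hnorm_scal, Rabs_right in Hx by lra.
    apply Rmult_le_reg_l with (/ r); [exact Hr |].
    replace (/ r * (M * r)) with M by (field; lra). exact Hx.
Qed.

End Norms.

Definition eventually_small (a : nat -> R) : Prop :=
  forall eps, 0 < eps -> exists N, forall n, (N <= n)%nat -> a n < eps.

Definition hconverges {H : HilbertSpace} (s : nat -> H) (z : H) : Prop :=
  eventually_small (fun n => hnorm (hsub (s n) z)).

Definition hcauchy {H : HilbertSpace} (s : nat -> H) : Prop :=
  forall eps, 0 < eps -> exists N, forall m n, (N <= m)%nat -> (N <= n)%nat ->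
    hnorm (hsub (s m) (s n)) < eps.

Section Limits.
Context {H : HilbertSpace}.

Lemma hcauchy_converges (s : nat -> H) : hcauchy s -> exists z, hconverges s z.
Proof. exact (hcomplete H s). Qed.

Lemma limit_in_kernel (T : H -> H) M (s : nat -> H) z :
  linear_op T -> 0 <= M -> (forall x, hnorm (T x) <= M * hnorm x) ->
  hconverges s z -> eventually_small (fun n => hnorm (T (s n))) -> T z = hzero.
Proof.
  intros Hl HM Hb Hs HT. apply hnorm_small_eq0. intros e He.
  set (q := e / (2 * (M + 1))).
  assert (Hq : 2 * M * q + 2 * q = e) by (unfold q; field; lra).
  destruct (Hs q) as [N1 HN1]; [unfold q; apply Rdiv_lt_0_compat; lra |].
  destruct (HT (e / 2)) as [N2 HN2]; [lra |].
  set (k := max N1 N2).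
  specialize (HN1 k (Nat.le_max_l _ _)). specialize (HN2 k (Nat.le_max_r _ _)).
  replace (T z) with (hadd (T (hsub z (s k))) (T (s k)))
    by (rewrite (linear_sub T) by exact Hl; vector_eq).
  eapply Rle_lt_trans; [apply hnorm_tri |].
  pose proof (Hb (hsub z (s k))) as Hbk. rewrite hnorm_sub_sym in Hbk.
  pose proof (hnorm_nonneg (hsub (s k) z)). nra.
Qed.

(* A limit of vectors orthogonal to z is itself orthogonal to z, so if
   every s_n is orthogonal to the limit z, then z = 0. *)
Lemma limit_orthogonal_self (s : nat -> H) z :
  hconverges s z -> (forall n, hinner (s n) z = 0) -> z = hzero.
Proof.
  intros Hs Horth. apply hnorm_small_eq0. intros e He.
  destruct (Hs e He) as [N HN]. specialize (HN N (le_n N)).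
  assert (Hzz : hinner z z = hinner (hsub z (s N)) z) by (rewrite hinner_sub_l, Horth; ring).
  pose proof (cauchy_schwarz (hsub z (s N)) z) as C.
  pose proof (Rle_abs (hinner (hsub z (s N)) z)) as Habs.
  rewrite <- Hzz, <- hnorm_sq in C, Habs. rewrite hnorm_sub_sym in C.
  pose proof (hnorm_nonneg z). nra.
Qed.

End Limits.

Section Relaxation.
Context {H : HilbertSpace}.
Variables (T : H -> H) (M h : R).
Hypotheses (T_lin : linear_op T) (T_sa : selfadjoint T) (T_pos : nonneg_op T)
  (M_ge0 : 0 <= M) (T_bound : forall x, hnorm (T x) <= M * hnorm x)
  (h_pos : 0 < h) (hM_lt2 : h * M < 2).

Definition relax (x : H) : H := hsub x (hscal h (T x)).

(* ‖Tx‖² <= ‖T‖ <Tx,x>, from Cauchy–Schwarz for the form <T., .>. *)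
Lemma T_sq_le x : hinner (T x) (T x) <= M * hinner (T x) x.
Proof.
  pose proof (cauchy_schwarz_op T T_lin T_sa T_pos x (T x)) as C.
  assert (C2 : hinner (T (T x)) (T x) <= M * hinner (T x) (T x)).
  { pose proof (cauchy_schwarz (T (T x)) (T x)). pose proof (Rle_abs (hinner (T (T x)) (T x))).
    pose proof (T_bound (T x)). rewrite <- hnorm_sq.
    pose proof (hnorm_nonneg (T x)). pose proof (hnorm_nonneg (T (T x))). nra. }
  pose proof (hinner_nonneg _ (T x)). pose proof (T_pos x).
  destruct (Req_dec (hinner (T x) (T x)) 0) as [E | E]; [rewrite E; nra |].
  apply Rmult_le_reg_r with (hinner (T x) (T x)); nra.
Qed.

Lemma relax_energy x :
  h * (2 - h * M) * hinner (T x) x <= hinner x x - hinner (relax x) (relax x).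
Proof.
  pose proof (T_sq_le x). unfold relax.
  rewrite hinner_sub_sub, !hinner_scal_l, !hinner_scal_r, (hinner_sym _ x (T x)). nra.
Qed.

Lemma relax_contraction x : hnorm (relax x) <= hnorm x.
Proof.
  apply sqrt_le_1_alt. pose proof (relax_energy x). pose proof (T_pos x).
  assert (0 <= h * (2 - h * M)) by nra. nra.
Qed.

Lemma relax_selfadjoint : selfadjoint relax.
Proof.
  intros x y. unfold relax.
  rewrite hinner_sub_l, hinner_sub_r, hinner_scal_l, hinner_scal_r, T_sa. ring.
Qed.

Lemma iter_shift x k p q :
  hinner (Nat.iter (p + k) relax x) (Nat.iter q relax x) =
  hinner (Nat.iter p relax x) (Nat.iter (q + k) relax x).
Proof.
  revert p q. induction k as [| k IH]; intros p q.
  - now rewrite !Nat.add_0_r.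
  - rewrite Nat.add_succ_r. simpl. rewrite relax_selfadjoint.
    replace (q + S k)%nat with (S q + k)%nat by lia. exact (IH p (S q)).
Qed.

Lemma iter_inner_pair x a b :
  hinner (Nat.iter (a + a) relax x) (Nat.iter (b + b) relax x) =
  hinner (Nat.iter (a + b) relax x) (Nat.iter (a + b) relax x).
Proof.
  assert (Hpair : forall c j, hinner (Nat.iter (c + c) relax x) (Nat.iter (j + c + (j + c)) relax x) =
                              hinner (Nat.iter (c + (j + c)) relax x) (Nat.iter (c + (j + c)) relax x)).
  { intros c j. pose proof (iter_shift x j (c + c) (c + (j + c))) as E.
    replace (c + c + j)%nat with (c + (j + c))%nat in E by lia.
    replace (c + (j + c) + j)%nat with (j + c + (j + c))%nat in E by lia.
    symmetry; exact E. }
  destruct (Nat.le_ge_cases a b) as [Hab | Hab].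
  - destruct (Nat.le_exists_sub a b Hab) as [j [-> _]]. apply Hpair.
  - destruct (Nat.le_exists_sub b a Hab) as [j [-> _]].
    rewrite hinner_sym, Hpair. now rewrite (Nat.add_comm (j + b) b).
Qed.

(* S fixes N(T) pointwise, so it preserves orthogonality to N(T). *)
Lemma iter_orth x : (forall z, T z = hzero -> hinner x z = 0) ->
  forall n z, T z = hzero -> hinner (Nat.iter n relax x) z = 0.
Proof.
  intros Hx n. induction n as [| n IH]; intros z Hz; simpl; [auto |].
  rewrite relax_selfadjoint. unfold relax.
  rewrite Hz, hscal_zero, hinner_sub_r, hinner_0r, IH by exact Hz. ring.
Qed.

Lemma iter_norm_mono x m j :
  hnorm (Nat.iter (m + j) relax x) <= hnorm (Nat.iter m relax x).
Proof.
  induction j as [| j IH].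
  - rewrite Nat.add_0_r. lra.
  - rewrite Nat.add_succ_r. simpl. eapply Rle_trans; [apply relax_contraction | exact IH].
Qed.

(* ‖S^n x‖² is decreasing and nonnegative, hence convergent. *)
Lemma iter_sq_norm_cv x :
  exists L, Un_cv (fun n => hinner (Nat.iter n relax x) (Nat.iter n relax x)) L.
Proof.
  set (d := fun n => hinner (Nat.iter n relax x) (Nat.iter n relax x)).
  assert (Hdec : Un_decreasing d).
  { intro n. apply sqrt_le_0; try apply hinner_nonneg. apply relax_contraction. }
  assert (Hlb : has_lb d).
  { exists 0. intros r [i ->]. unfold opp_seq. pose proof (hinner_nonneg _ (Nat.iter i relax x)).
    unfold d. lra. }
  destruct (decreasing_cv d Hdec Hlb) as [L HL]. now exists L.
Qed.

(* ‖S^{2m}x - S^{2n}x‖² = ‖S^{2m}x‖² - 2‖S^{m+n}x‖² + ‖S^{2n}x‖², which is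
   small once all three squared norms are close to their common limit. *)
Lemma even_iterates_cauchy x L :
  Un_cv (fun n => hinner (Nat.iter n relax x) (Nat.iter n relax x)) L ->
  hcauchy (fun k => Nat.iter (k + k) relax x).
Proof.
  intros HL e He. destruct (HL (e * e / 4)) as [N HN]; [nra |].
  exists N. intros m n Hm Hn. unfold hnorm. apply sqrt_lt_square; [apply hinner_nonneg | exact He |].
  cbv beta. rewrite hinner_sub_sub, (iter_inner_pair x m n).
  pose proof (HN (m + m)%nat ltac:(lia)) as H1.
  pose proof (HN (n + n)%nat ltac:(lia)) as H2.
  pose proof (HN (m + n)%nat ltac:(lia)) as H3.
  unfold Rdist in H1, H2, H3.
  apply Rabs_def2 in H1. apply Rabs_def2 in H2. apply Rabs_def2 in H3. lra.
Qed.

(* The energy drops ‖S^n x‖² - ‖S^{n+1} x‖² tend to 0, and they control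
   ‖T S^n x‖²; hence T S^n x -> 0. *)
Lemma T_iterates_vanish x L :
  Un_cv (fun n => hinner (Nat.iter n relax x) (Nat.iter n relax x)) L ->
  eventually_small (fun n => hnorm (T (Nat.iter n relax x))).
Proof.
  intros HL e He.
  set (c := h * (2 - h * M)). assert (Hc : 0 < c) by (unfold c; nra).
  set (q := e * e / (2 * (M + 1))).
  assert (Hq : 2 * M * q + 2 * q = e * e) by (unfold q; field; lra).
  assert (Hq0 : 0 < q) by (unfold q; apply Rdiv_lt_0_compat; nra).
  destruct (HL (c * q)) as [N HN]; [nra |].
  exists N. intros n Hn. set (v := Nat.iter n relax x).
  pose proof (HN n Hn) as H1. pose proof (HN (S n) ltac:(lia)) as H2.
  unfold Rdist in H1, H2. apply Rabs_def2 in H1. apply Rabs_def2 in H2.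
  simpl in H2. fold v in H1, H2.
  pose proof (relax_energy v) as Hen. pose proof (T_sq_le v) as Hsq. fold c in Hen.
  pose proof (T_pos v). pose proof (hinner_nonneg _ (T v)).
  assert (Hdrop : c * hinner (T v) (T v) < c * (e * e)).
  { assert (Hcv : c * hinner (T v) v < 2 * (c * q)) by lra.
    apply Rle_lt_trans with (M * (2 * (c * q))); [| nra].
    apply Rle_trans with (M * (c * hinner (T v) v)); [nra |].
    apply Rmult_le_compat_l; lra. }
  unfold hnorm. apply sqrt_lt_square; [apply hinner_nonneg | exact He |].
  apply Rmult_lt_reg_l with c; assumption.
Qed.

Lemma noise_free_convergence x : (forall z, T z = hzero -> hinner x z = 0) ->
  eventually_small (fun n => hnorm (Nat.iter n relax x)).
Proof.
  intros Hx. destruct (iter_sq_norm_cv x) as [L HL].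
  destruct (hcauchy_converges _ (even_iterates_cauchy x L HL)) as [z Hz].
  assert (HTz : T z = hzero).
  { apply (limit_in_kernel T M _ z T_lin M_ge0 T_bound Hz).
    intros e He. destruct (T_iterates_vanish x L HL e He) as [N HN].
    exists N. intros k Hk. apply HN. lia. }
  assert (Hz0 : z = hzero).
  { apply (limit_orthogonal_self _ z Hz). intro k. now apply iter_orth. }
  subst z. intros e He. destruct (Hz e He) as [N HN]. exists (N + N)%nat.
  intros n Hn. specialize (HN N (le_n N)).
  replace (hsub (Nat.iter (N + N) relax x) hzero) with (Nat.iter (N + N) relax x) in HN by vector_eq.
  destruct (Nat.le_exists_sub (N + N) n Hn) as [j [-> _]].
  rewrite Nat.add_comm. eapply Rle_lt_trans; [apply iter_norm_mono | exact HN].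
Qed.

End Relaxation.

(* Propagation of the data error: the noisy iterates stay within
   n h ‖P(f_δ - f)‖ of the exact-data iterates S^n (u_0 - y), because S is a
   contraction and each step adds the perturbation h P (f_δ - f). *)
Lemma data_error_bound {H : HilbertSpace} (A P : H -> H) (f y u0 fd : H) (h : R) :
  linear_op A -> linear_op P -> A y = f -> 0 <= h ->
  (forall x, hnorm (relax (fun v => P (A v)) h x) <= hnorm x) ->
  forall n, hnorm (hsub (hsub (iterate P A h fd u0 n) y)
                        (Nat.iter n (relax (fun v => P (A v)) h) (hsub u0 y)))
            <= INR n * (h * hnorm (P (hsub fd f))).
Proof.
  intros LA LP Hy Hh Hcontr n. induction n as [| n IH].
  - simpl. replace (hsub (hsub u0 y) (hsub u0 y)) with (@hzero H) by vector_eq.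
    rewrite hnorm_zero. lra.
  - set (Sh := relax (fun v => P (A v)) h) in *.
    set (u := iterate P A h fd u0 n) in *. set (w := Nat.iter n Sh (hsub u0 y)) in *.
    assert (E : hsub (hsub (iterate P A h fd u0 (S n)) y) (Nat.iter (S n) Sh (hsub u0 y)) =
                hadd (Sh (hsub (hsub u y) w)) (hscal h (P (hsub fd f)))).
    { simpl. fold u w. unfold Sh, relax.
      rewrite !(linear_sub A) by exact LA. rewrite !(linear_sub P) by exact LP. rewrite Hy.
      vector_eq. }
    rewrite E, S_INR. eapply Rle_trans; [apply hnorm_tri |].
    rewrite hnorm_scal, Rabs_right by lra.
    pose proof (Hcontr (hsub (hsub u y) w)). lra.
Qed.

(* Convergence for every stopping rule with n_δ h -> ∞ and n_δ h δ -> 0: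
   split u_n - y into the exact-data error S^n (u_0 - y), small for large
   n h, and the propagated data error, at most n h ‖P‖ δ. *)
Lemma landweber_convergence (H : HilbertSpace) (A P : H -> H) (f y u0 : H) (h : R)
  (fdel : R -> H)
  (HA : bounded_linear A) (HP : bounded_linear P) (Hy : A y = f)
  (Hsa : selfadjoint (fun x => P (A x)))
  (Hpos : nonneg_op (fun x => P (A x)))
  (Hker : forall u, in_kernel (fun x => P (A x)) u <-> in_kernel A u)
  (Hh : 0 < h)
  (HhT : exists M, is_opnorm (fun x => P (A x)) M /\ h * M < 2)
  (Hu0 : orth_kernel A (hsub u0 y))
  (Hfdel : forall delta, 0 < delta -> hnorm (hsub (fdel delta) f) <= delta)
  (n : R -> nat)
  (Hn_inf : forall K, exists d0, 0 < d0 /\ forall delta, 0 < delta < d0 ->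
      K < INR (n delta) * h)
  (Hn_noise : forall eps, 0 < eps -> exists d0, 0 < d0 /\ forall delta, 0 < delta < d0 ->
      INR (n delta) * h * delta < eps) :
  forall eps, 0 < eps -> exists d0, 0 < d0 /\ forall delta, 0 < delta < d0 ->
    hnorm (hsub (iterate P A h (fdel delta) u0 (n delta)) y) < eps.
Proof.
  destruct (bounded_linear_bound P HP) as [Cp [HCp0 HCp]].
  destruct HA as [HAa [HAs _]], HP as [HPa [HPs _]].
  assert (LA : linear_op A) by now split. assert (LP : linear_op P) by now split.
  set (T := fun x => P (A x)).
  assert (LT : linear_op T) by (split; intros; unfold T; rewrite ?HAa, ?HPa, ?HAs, ?HPs; auto).
  destruct HhT as [M [HMn HhM]]. destruct (opnorm_bound T M LT HMn) as [HM HMb].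
  assert (Hexact : eventually_small (fun k => hnorm (Nat.iter k (relax T h) (hsub u0 y)))).
  { apply (noise_free_convergence T M h LT Hsa Hpos HM HMb Hh HhM).
    intros z Hz. apply Hu0, Hker, Hz. }
  intros eps Heps.
  destruct (Hexact (eps / 2)) as [N HN]; [lra |].
  destruct (Hn_inf (INR N * h)) as [d1 [Hd1 Hd1']].
  set (q := eps / (2 * (Cp + 1))).
  assert (Hq : 2 * Cp * q + 2 * q = eps) by (unfold q; field; lra).
  destruct (Hn_noise q) as [d2 [Hd2 Hd2']]; [unfold q; apply Rdiv_lt_0_compat; lra |].
  exists (Rmin d1 d2). split; [now apply Rmin_pos |].
  intros delta [Hdp Hdl].
  specialize (Hd1' delta (conj Hdp (Rlt_le_trans _ _ _ Hdl (Rmin_l _ _)))).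
  specialize (Hd2' delta (conj Hdp (Rlt_le_trans _ _ _ Hdl (Rmin_r _ _)))).
  assert (HnN : (N <= n delta)%nat) by (apply INR_le, Rlt_le, (Rmult_lt_reg_r h); auto).
  specialize (HN _ HnN).
  pose proof (data_error_bound A P f y u0 (fdel delta) h LA LP Hy (Rlt_le _ _ Hh)
                (relax_contraction T M h LT Hsa Hpos HM HMb Hh HhM) (n delta)) as Herr.
  fold T in Herr.
  set (u := iterate P A h (fdel delta) u0 (n delta)) in *.
  set (v := Nat.iter (n delta) (relax T h) (hsub u0 y)) in *.
  assert (Hnoise : INR (n delta) * (h * hnorm (P (hsub (fdel delta) f))) <= eps / 2).
  { pose proof (pos_INR (n delta)).
    assert (HPd : hnorm (P (hsub (fdel delta) f)) <= Cp * delta).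
    { eapply Rle_trans; [apply HCp |]. apply Rmult_le_compat_l; auto. }
    assert (0 <= INR (n delta) * h) by nra. nra. }
  replace (hsub u y) with (hadd (hsub (hsub u y) v) v) by vector_eq.
  eapply Rle_lt_trans; [apply hnorm_tri | lra].
Qed.

Lemma Rpower_small p c : 0 < p -> 0 < c ->
  exists d0, 0 < d0 /\ forall d, 0 < d < d0 -> Rpower d p < c.
Proof.
  intros Hp Hc. exists (exp (ln c / p)). split; [apply exp_pos |].
  intros d [Hd Hd0]. unfold Rpower. rewrite <- (exp_ln c) by exact Hc. apply exp_increasing.
  apply ln_increasing in Hd0; [| exact Hd]. rewrite ln_exp in Hd0.
  apply Rmult_lt_compat_l with (r := p) in Hd0; [| exact Hp].
  replace (p * (ln c / p)) with (ln c) in Hd0 by (field; lra). lra.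
Qed.

(* The rule n_δ ≈ C/(h δ^γ) (within 1) makes n_δ h -> ∞ ... *)
Lemma power_rule_diverges (C gamma h : R) (n : R -> nat) : 0 < h -> 0 < C -> 0 < gamma ->
  (forall delta, 0 < delta -> Rabs (INR (n delta) - C / (h * Rpower delta gamma)) <= 1) ->
  forall K, exists d0, 0 < d0 /\ forall delta, 0 < delta < d0 -> K < INR (n delta) * h.
Proof.
  intros Hh HC Hg Hn K. set (B := Rabs K + h + 1).
  assert (HB : 0 < B) by (unfold B; pose proof (Rabs_pos K); lra).
  destruct (Rpower_small gamma (C / B)) as [d0 [Hd0 Hd]]; [exact Hg | apply Rdiv_lt_0_compat; lra |].
  exists d0. split; [exact Hd0 |]. intros delta Hdel.
  destruct (Rabs_le_bounds _ _ (Hn delta ltac:(lra))) as [Hlow _].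
  specialize (Hd delta Hdel). set (p := Rpower delta gamma) in *.
  assert (Hp : 0 < p) by (unfold p, Rpower; apply exp_pos).
  assert (HBp : B * p < C).
  { apply Rmult_lt_compat_l with (r := B) in Hd; [| exact HB].
    replace (B * (C / B)) with C in Hd by (field; lra). exact Hd. }
  assert (Hnp : C - h * p <= INR (n delta) * h * p).
  { apply Rmult_le_compat_r with (r := h * p) in Hlow; [| nra].
    replace ((INR (n delta) - C / (h * p)) * (h * p)) with (INR (n delta) * h * p - C) in Hlow
      by (field; lra).
    lra. }
  assert (HK : Rabs K + 1 < INR (n delta) * h).
  { apply Rmult_lt_reg_r with p; [exact Hp |]. unfold B in HBp. lra. }
  pose proof (Rle_abs K). lra.
Qed.

(* ... while n_δ h δ <= C δ^{1-γ} + h δ -> 0, since γ < 1. *)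
Lemma power_rule_noise_vanishes (C gamma h : R) (n : R -> nat) :
  0 < h -> 0 < C -> 0 < gamma < 1 ->
  (forall delta, 0 < delta -> Rabs (INR (n delta) - C / (h * Rpower delta gamma)) <= 1) ->
  forall eps, 0 < eps -> exists d0, 0 < d0 /\ forall delta, 0 < delta < d0 ->
    INR (n delta) * h * delta < eps.
Proof.
  intros Hh HC Hg Hn eps Heps.
  destruct (Rpower_small (1 - gamma) (eps / (2 * C))) as [d1 [Hd1 Hd1']];
    [lra | apply Rdiv_lt_0_compat; lra |].
  exists (Rmin d1 (eps / (2 * h))). split; [apply Rmin_pos; [exact Hd1 | apply Rdiv_lt_0_compat; lra] |].
  intros delta [Hdp Hdl].
  specialize (Hd1' delta (conj Hdp (Rlt_le_trans _ _ _ Hdl (Rmin_l _ _)))).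
  pose proof (Rlt_le_trans _ _ _ Hdl (Rmin_r _ _)) as Hdh.
  destruct (Rabs_le_bounds _ _ (Hn delta Hdp)) as [_ Hup].
  set (p := Rpower delta gamma) in *. set (r := Rpower delta (1 - gamma)) in *.
  assert (Hp : 0 < p) by (unfold p, Rpower; apply exp_pos).
  assert (Hrp : r * p = delta).
  { unfold r, p. rewrite <- Rpower_plus. replace (1 - gamma + gamma) with 1 by ring.
    now apply Rpower_1. }
  assert (Hbound : INR (n delta) * h * delta <= C * r + h * delta).
  { apply Rmult_le_compat_r with (r := h * delta) in Hup; [| nra].
    replace ((INR (n delta) - C / (h * p)) * (h * delta)) with (INR (n delta) * h * delta - C * r)
      in Hup by (rewrite <- Hrp; field; lra).
    lra. }
  assert (HCr : C * r < eps / 2).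
  { apply Rmult_lt_compat_l with (r := C) in Hd1'; [| exact HC].
    replace (C * (eps / (2 * C))) with (eps / 2) in Hd1' by (field; lra). exact Hd1'. }
  assert (Hhd : h * delta < eps / 2).
  { apply Rmult_lt_compat_l with (r := h) in Hdh; [| exact Hh].
    replace (h * (eps / (2 * h))) with (eps / 2) in Hdh by (field; lra). exact Hdh. }
  lra.
Qed.

Theorem theorem4 (H : HilbertSpace) (A P : H -> H) (f y u0 : H) (h : R)
  (fdel : R -> H)
  (HA : bounded_linear A) (HP : bounded_linear P)
  (Hsolv : exists u, A u = f)
  (Hy : A y = f) (Hyorth : orth_kernel A y)
  (Hsa : selfadjoint (fun x => P (A x)))
  (Hpos : nonneg_op (fun x => P (A x)))
  (Hker : forall u, in_kernel (fun x => P (A x)) u <-> in_kernel A u)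
  (Hh : 0 < h)
  (HhT : exists M, is_opnorm (fun x => P (A x)) M /\ h * M < 2)
  (Hu0 : orth_kernel A (hsub u0 y))
  (Hfdel : forall delta, 0 < delta -> hnorm (hsub (fdel delta) f) <= delta) :
  (forall n : R -> nat,
     (forall delta, 0 < delta -> (1 <= n delta)%nat) ->
     (forall K, exists d0, 0 < d0 /\ forall delta, 0 < delta < d0 ->
         K < INR (n delta) * h) ->
     (forall eps, 0 < eps -> exists d0, 0 < d0 /\ forall delta, 0 < delta < d0 ->
         INR (n delta) * h * delta < eps) ->
     forall eps, 0 < eps -> exists d0, 0 < d0 /\ forall delta, 0 < delta < d0 ->
         hnorm (hsub (iterate P A h (fdel delta) u0 (n delta)) y) < eps)
  /\
  (forall (C gamma : R) (n : R -> nat), 0 < C -> 0 < gamma < 1 ->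
     (forall delta, 0 < delta ->
         Rabs (INR (n delta) - C / (h * Rpower delta gamma)) <= 1) ->
     forall eps, 0 < eps -> exists d0, 0 < d0 /\ forall delta, 0 < delta < d0 ->
         hnorm (hsub (iterate P A h (fdel delta) u0 (n delta)) y) < eps).
Proof.
  split.
  - intros n _ Hn_inf Hn_noise.
    exact (landweber_convergence H A P f y u0 h fdel HA HP Hy Hsa Hpos Hker Hh HhT Hu0 Hfdel
             n Hn_inf Hn_noise).
  - intros C gamma n HC Hgamma Hn.
    apply (landweber_convergence H A P f y u0 h fdel HA HP Hy Hsa Hpos Hker Hh HhT Hu0 Hfdel n).
    + exact (power_rule_diverges C gamma h n Hh HC (proj1 Hgamma) Hn).
    + exact (power_rule_noise_vanishes C gamma h n Hh HC Hgamma Hn).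
Qed.
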